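(* Given a moment graph $\mathcal{G}$ on a lattice $\Lambda$ and a $\mathcal{G}$-compatible equivalence relation `$\sim$' on its vertex set, the quotient $\mathcal{G}_\sim$ is a moment graph on $\Lambda$.
   Context: A moment graph on a lattice $\Lambda$ is $\mathcal{G}=\big((V,\le), l\colon E\to \Lambda\setminus\{0\}\big)$ where $(V,\le)$ is a poset, $E\subset V\times V$ is a set of directed edges $v\to w$ labelled by $l(v\to w)\in\Lambda\setminus\{0\}$, and for every edge $v\to w$ we have $v\le w$, $v\ne w$. An equivalence relation `$\sim$' on $V$ is $\mathcal{G}$-compatible if (EQV1) $v\sim w$ implies $v\sim u$ for all $v\le u\le w$; (EQV2) if $v_1\to w_1\in E$, $v_1\not\sim w_1$, then for any $v_2\sim v_1$ there is a unique $w_2\sim w_1$ with $v_2\to w_2\in E$, and moreover $l(v_1\to w_1)=l(v_2\to w_2)$. The quotient $\mathcal{G}_\sim=\big((V_\sim,\le_\sim),l_\sim\colon E_\sim\to\Lambda\setminus\{0\}\big)$ has vertex set $V_\sim$ the set of equivalence classes $[v]$; edges $E_\sim=\{[v]\to[w]\mid v\not\sim w,\ \exists v'\sim v,\ w'\sim w \text{ with } v'\to w'\in E\}$; $\le_\sim$ the transitive closure of the relations $[v]\le_\sim[w]$ for $[v]\to[w]\in E_\sim$; and $l_\sim([v]\to[w]):=l(v'\to w')$ for $v'\sim v$, $w'\sim w$, $v'\to w'\in E$. *)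

From mathcomp Require Import all_boot all_order all_algebra.
From Stdlib Require Import Relations ClassicalEpsilon.

Set Implicit Arguments.
Unset Strict Implicit.
Unset Printing Implicit Defensive.

Local Open Scope ring_scope.

Definition lattice (n : nat) := 'rV[int]_n.

(* A moment graph on a lattice Lambda: vertex type V with a relation le,
   an edge set E (v -> w iff E v w) and a labelling l, meaningful on edges. *)
Definition is_moment_graph (Lam : zmodType) (V : Type)
  (le : V -> V -> Prop) (E : V -> V -> Prop) (l : V -> V -> Lam) : Prop :=
  (forall v, le v v) /\
  (forall v w, le v w -> le w v -> v = w) /\
  (forall u v w, le u v -> le v w -> le u w) /\
  (forall v w, E v w -> le v w /\ v <> w /\ l v w <> 0).

Definition EQV1 (V : Type) (le : V -> V -> Prop) (eqv : V -> V -> Prop) : Prop :=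
  forall v w u, eqv v w -> le v u -> le u w -> eqv v u.

Definition EQV2 (Lam : zmodType) (V : Type) (E : V -> V -> Prop)
  (l : V -> V -> Lam) (eqv : V -> V -> Prop) : Prop :=
  forall v1 w1, E v1 w1 -> ~ eqv v1 w1 ->
  forall v2, eqv v2 v1 ->
    (exists w2, eqv w2 w1 /\ E v2 w2 /\ l v1 w1 = l v2 w2) /\
    (forall w2 w2', eqv w2 w1 -> E v2 w2 -> eqv w2' w1 -> E v2 w2' -> w2 = w2').

Definition compatible (Lam : zmodType) (V : Type) (le E : V -> V -> Prop)
  (l : V -> V -> Lam) (eqv : V -> V -> Prop) : Prop :=
  EQV1 le eqv /\ EQV2 E l eqv.

Definition eqclass (V : Type) (eqv : V -> V -> Prop) (v : V) : V -> Prop :=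
  fun u => eqv v u.

Definition qvert (V : Type) (eqv : V -> V -> Prop) : Type :=
  { C : V -> Prop | exists v, C = eqclass eqv v }.

Definition cls (V : Type) (eqv : V -> V -> Prop) (v : V) : qvert eqv :=
  exist _ (eqclass eqv v) (ex_intro _ v erefl).

Definition qedge (V : Type) (eqv : V -> V -> Prop) (E : V -> V -> Prop)
  (C D : qvert eqv) : Prop :=
  exists v w, C = cls eqv v /\ D = cls eqv w /\ ~ eqv v w /\
    exists v' w', eqv v' v /\ eqv w' w /\ E v' w'.

Definition qle (V : Type) (eqv : V -> V -> Prop) (E : V -> V -> Prop) :
  qvert eqv -> qvert eqv -> Prop :=
  clos_refl_trans (qvert eqv) (qedge E).

Definition qlabel (Lam : zmodType) (V : Type) (eqv : V -> V -> Prop)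
  (E : V -> V -> Prop) (l : V -> V -> Lam) (C D : qvert eqv) : Lam :=
  epsilon (inhabits (0 : Lam)) (fun a =>
    exists v w v' w', C = cls eqv v /\ D = cls eqv w /\
      eqv v' v /\ eqv w' w /\ E v' w' /\ a = l v' w').

Arguments qvert {V} eqv.
Arguments cls {V} eqv v.
Arguments qedge {V} eqv E C D.
Arguments qle {V} eqv E _ _.
Arguments qlabel {Lam V} eqv E l C D.

(** Every class meets every edge leaving it (EQV2), so a chain of quotient
   edges out of [[a]] lifts to a chain of edges out of [a]; hence [[a] <=_~ D]
   forces [a <= b] for some [b] in [D].  If moreover [D <=_~ [a]], then
   [a <= b <= a'] with [a ~ a'], and EQV1 gives [a ~ b], i.e. [[a] = D].
   The label of [[v] -> [w]] is independent of the representative edge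
   because, by EQV2, each [v2 ~ v1] has exactly one edge into [[w1]], and it
   carries the label of [v1 -> w1]. *)

From mathcomp Require Import all_boot all_order all_algebra.
From Stdlib Require Import Relations ClassicalEpsilon ProofIrrelevance.
From Stdlib Require Import FunctionalExtensionality PropExtensionality.

Set Implicit Arguments.
Unset Strict Implicit.

Section Classes.

Variables (V : Type) (eqv : V -> V -> Prop).
Hypothesis eqv_refl : reflexive V eqv.
Hypothesis eqv_trans : forall {x y z}, eqv x y -> eqv y z -> eqv x z.
Hypothesis eqv_sym : forall {x y}, eqv x y -> eqv y x.

Lemma eq_cls (v w : V) : cls eqv v = cls eqv w <-> eqv v w.
Proof.
split=> vw.
  by have : proj1_sig (cls eqv v) w by rewrite vw; exact: eqv_refl.
have classE : eqclass eqv v = eqclass eqv w.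
  apply: functional_extensionality => u; apply: propositional_extensionality.
  by split=> [vu | wu]; [apply: eqv_trans (eqv_sym vw) vu | apply: eqv_trans vw wu].
rewrite /cls; move: (ex_intro _ v _) (ex_intro _ w _); rewrite classE => p q.
by rewrite (proof_irrelevance _ p q).
Qed.

Lemma qvert_cls (C : qvert eqv) : exists v, C = cls eqv v.
Proof.
case: C => C [v defC]; exists v; rewrite /cls.
move: (ex_intro _ v _) defC; rewrite -/(eqclass eqv v) => p defC.
move: p; rewrite -defC => p.
by rewrite (proof_irrelevance _ p (ex_intro _ v defC)).
Qed.

End Classes.

Section Quotient.

Variables (Lam : zmodType) (V : Type) (le E : V -> V -> Prop) (l : V -> V -> Lam).
Variable eqv : V -> V -> Prop.
Hypothesis eqv_refl : reflexive V eqv.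
Hypothesis eqv_trans : forall {x y z}, eqv x y -> eqv y z -> eqv x z.
Hypothesis eqv_sym : forall {x y}, eqv x y -> eqv y x.
Hypothesis eqv2 : EQV2 E l eqv.

Let eq_cls := eq_cls eqv_refl (@eqv_trans) (@eqv_sym).

Lemma eqv_edge_label (v1 w1 v2 w2 : V) :
  E v1 w1 -> E v2 w2 -> ~ eqv v1 w1 -> eqv v1 v2 -> eqv w1 w2 ->
  l v1 w1 = l v2 w2.
Proof.
move=> e1 e2 nvw1 v12 w12.
have [[w3 [w31 [e3 ->]]] uniq_w] := eqv2 e1 nvw1 (eqv_sym v12).
by rewrite (uniq_w _ _ w31 e3 (eqv_sym w12) e2).
Qed.

Lemma qedge_cls_lift (a : V) (D : qvert eqv) :
  qedge eqv E (cls eqv a) D -> exists2 b, D = cls eqv b & E a b.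
Proof.
move=> [v [w [/eq_cls av [-> [nvw [v' [w' [v'v [w'w e']]]]]]]]].
have nv'w' : ~ eqv v' w'.
  by move=> v'w'; apply: nvw; apply: eqv_trans (eqv_sym v'v) (eqv_trans v'w' w'w).
have [[b [bw' [eab _]]] _] := eqv2 e' nv'w' (eqv_trans av (eqv_sym v'v)).
by exists b => //; apply/eq_cls; apply: eqv_trans (eqv_sym w'w) (eqv_sym bw').
Qed.

Lemma qedge_neq (C D : qvert eqv) : qedge eqv E C D -> C <> D.
Proof. by move=> [v [w [-> [-> [nvw _]]]]] /eq_cls. Qed.

Lemma qlabel_cls (v w v' w' : V) :
  ~ eqv v w -> eqv v' v -> eqv w' w -> E v' w' ->
  qlabel eqv E l (cls eqv v) (cls eqv w) = l v' w'.
Proof.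
move=> nvw v'v w'w e'.
rewrite /qlabel; set P := (fun a => _).
have : P (epsilon (inhabits 0%R) P).
  by apply: epsilon_spec; exists (l v' w'), v, w, v', w'.
move: (epsilon _ _) => a [v0 [w0 [v'' [w'' [/eq_cls vv0 [/eq_cls ww0]]]]]].
move=> [v''v0 [w''w0 [e'' ->]]].
have v''v : eqv v'' v by apply: eqv_trans v''v0 (eqv_sym vv0).
have w''w : eqv w'' w by apply: eqv_trans w''w0 (eqv_sym ww0).
apply: eqv_edge_label => //.
- by move=> v''w''; apply: nvw; apply: eqv_trans (eqv_sym v''v) (eqv_trans v''w'' w''w).
- exact: eqv_trans v''v (eqv_sym v'v).
- exact: eqv_trans w''w (eqv_sym w'w).
Qed.

Hypothesis le_refl : reflexive V le.
Hypothesis le_trans : forall {x y z}, le x y -> le y z -> le x z.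
Hypothesis edge_le : forall {v w}, E v w -> le v w.

Lemma qle_cls_lift (a : V) (D : qvert eqv) :
  qle eqv E (cls eqv a) D -> exists2 b, D = cls eqv b & le a b.
Proof.
move=> /clos_rt_rt1n_iff; move Ca: (cls eqv a) => C path.
elim: path a Ca => [C0 | C0 C1 D1 e _ IH] a Ca; first by exists a.
move: e; rewrite -Ca => /qedge_cls_lift [b C1b eab].
have [c -> lebc] := IH b (esym C1b).
by exists c => //; apply: le_trans (edge_le eab) lebc.
Qed.

Hypothesis eqv1 : EQV1 le eqv.

Lemma qle_antisym (C D : qvert eqv) :
  qle eqv E C D -> qle eqv E D C -> C = D.
Proof.
have [a ->] := qvert_cls C.
move=> /qle_cls_lift [b -> leab] /qle_cls_lift [a' /eq_cls aa' leba'].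
by apply/eq_cls; apply: eqv1 aa' leab leba'.
Qed.

End Quotient.

Theorem mainTheorem1 (n : nat) (V : Type) (le E : V -> V -> Prop)
  (l : V -> V -> lattice n) (eqv : V -> V -> Prop) :
  is_moment_graph le E l ->
  equivalence V eqv ->
  compatible le E l eqv ->
  is_moment_graph (qle eqv E) (qedge eqv E) (qlabel eqv E l) /\
  (* the label l_~ is well defined: it equals l(v' -> w') for every
     representative edge v' -> w' between the two classes *)
  (forall v w v' w', ~ eqv v w -> eqv v' v -> eqv w' w -> E v' w' ->
     qlabel eqv E l (cls eqv v) (cls eqv w) = l v' w').
Proof.
move=> [le_refl [_ [le_trans edgeP]]] [eqv_refl eqv_trans eqv_sym] [eqv1 eqv2].
have edge_le v w (e : E v w) : le v w by case: (edgeP v w e).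
have qlabelE := qlabel_cls eqv_refl eqv_trans eqv_sym eqv2.
split=> //; split; first exact: rt_refl.
split; first exact: qle_antisym eqv2 le_refl le_trans edge_le eqv1.
split; first exact: rt_trans.
move=> C D e; split; first exact: rt_step.
split; first exact: (qedge_neq eqv_refl eqv_trans eqv_sym e).
move: e => [v [w [-> [-> [nvw [v' [w' [v'v [w'w e']]]]]]]]].
by rewrite (qlabelE _ _ _ _ nvw v'v w'w e'); case: (edgeP _ _ e') => _ [].
Qed.
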